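(* Let $\{T_n\}_{n\in\mathbb{Z}}$ and $\{S_n\}_{n\in\mathbb{Z}}$ be discrete linear evolution processes in a Banach space $X$ which admit nonuniform exponential dichotomies with projections $\{Q^{\mathcal{T}}_n\}$ and $\{Q^{\mathcal{S}}_n\}$, exponents $\alpha_{\mathcal{T}}$ and $\alpha_{\mathcal{S}}$ respectively, and the same bound $K(n)\le De^{\nu|n|}$. If $\nu<\min\{\alpha_{\mathcal{T}},\alpha_{\mathcal{S}}\}$ and $$\sup_{n\in\mathbb{Z}}\{K(n+1)\|T_n-S_n\|_{\mathcal{L}(X)}\}\le\epsilon,$$ then $$\sup_{n\in\mathbb{Z}}\{K(n)^{-1}\|Q^{\mathcal{T}}_n-Q^{\mathcal{S}}_n\|_{\mathcal{L}(X)}\}\le\frac{e^{-\alpha_{\mathcal{S}}}+e^{-\alpha_{\mathcal{T}}}}{1-e^{-(\alpha_{\mathcal{S}}+\alpha_{\mathcal{T}})}}\,\epsilon.$$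
   Context: A discrete (linear) evolution process in a Banach space $X$ is a family $\{S_{n,m}: n,m\in\mathbb{Z},\ n\ge m\}\subset\mathcal{L}(X)$ with $S_{n,n}=Id_X$ and $S_{n,m}S_{m,k}=S_{n,k}$ for $n\ge m\ge k$; equivalently it is given by one-step operators $S_n:=S_{n+1,n}$ via $S_{n,m}=S_{n-1}\cdots S_m$ ($n>m$). It admits a nonuniform exponential dichotomy if there is a family of bounded projections $\{Q_n\}_{n\in\mathbb{Z}}\subset\mathcal{L}(X)$ such that: (i) $Q_nS_{n,m}=S_{n,m}Q_m$ for $n\ge m$; (ii) for $n\ge m$, $S_{n,m}$ restricted to $R(Q_m)$ is an isomorphism onto $R(Q_n)$, and $S_{m,n}$ denotes its inverse; (iii) there are a function $K:\mathbb{Z}\to[1,\infty)$ (the bound) with $K(n)\le De^{\nu|n|}$ for some $D\ge1$, $\nu>0$, and $\alpha>0$ (the exponent) with $\|S_{n,m}(Id_X-Q_m)\|\le K(m)e^{-\alpha(n-m)}$ for $n\ge m$ and $\|S_{n,m}Q_m\|\le K(m)e^{\alpha(n-m)}$ for $n\le m$. *)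

From HB Require Import structures.
From mathcomp Require Import all_boot all_order all_algebra.
From mathcomp Require Import all_classical all_reals all_analysis.
Set Implicit Arguments. Unset Strict Implicit. Unset Printing Implicit Defensive.
Import Order.TTheory GRing.Theory Num.Theory.
Import numFieldNormedType.Exports.
Local Open Scope ring_scope.

Section Defs.
Context {R : realType} {X : completeNormedModType R}.

Definition opnorm_le (A : X -> X) (c : R) : Prop :=
  forall x : X, `|A x| <= c * `|x|.

Definition bounded_linear (A : {linear X -> X}) : Prop :=
  exists c : R, opnorm_le A c.

Fixpoint evol_from (S : int -> X -> X) (m : int) (k : nat) (x : X) : X :=
  match k with
  | 0%N => x
  | k'.+1 => S (m + k'%:Z) (evol_from S m k' x)
  end.

(* S_{n,m} = S_{n-1} ... S_m  for n >= m (S_{n,n} = Id). Only meaningful for n >= m. *)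
Definition evol (S : int -> X -> X) (n m : int) : X -> X :=
  evol_from S m `|n - m|%N.

(* Nonuniform exponential dichotomy of the process with one-step operators S,
   projections Q, bound K and exponent alpha (the growth condition
   K n <= D e^{nu |n|} is stated separately, see [bound_growth]).
   Sb n m (n <= m) is the backward operator S_{n,m} : R(Q_m) -> R(Q_n),
   the inverse of S_{m,n} restricted to R(Q_n). *)
Definition nonuniform_ED (S : int -> X -> X) (Q : int -> {linear X -> X})
    (K : int -> R) (alpha : R) : Prop :=
  [/\ forall n, bounded_linear (Q n) /\ (forall x, Q n (Q n x) = Q n x),
      forall n, 1 <= K n,
      0 < alpha,
      (forall n m, (m <= n)%R -> forall x, Q n (evol S n m x) = evol S n m (Q m x)) &
      exists Sb : int -> int -> X -> X,
      [/\
          (forall n m, (m <= n)%R -> forall x, Q m x = x ->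
               Sb m n (evol S n m x) = x),
          (forall n m, (m <= n)%R -> forall y, Q n y = y ->
               Q m (Sb m n y) = Sb m n y /\ evol S n m (Sb m n y) = y),
          (forall n m, (m <= n)%R ->
               opnorm_le (fun x => evol S n m (x - Q m x))
                         (K m * expR (- alpha * (n - m)%:~R))) &
          (forall n m, (n <= m)%R ->
               opnorm_le (fun x => Sb n m (Q m x))
                         (K m * expR (alpha * (n - m)%:~R)))]].

Definition bound_growth (K : int -> R) (D nu : R) : Prop :=
  1 <= D /\ 0 < nu /\ forall n : int, K n <= D * expR (nu * `|n|%:~R).

End Defs.

From HB Require Import structures.
From mathcomp Require Import all_boot all_order all_algebra.
From mathcomp Require Import all_classical all_reals all_analysis.
From mathcomp Require Import ring lra zify.
Import Order.TTheory GRing.Theory Num.Theory.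
Import numFieldNormedType.Exports.
Local Open Scope ring_scope.

(* Fix n and x and split  Q^T_n x - Q^S_n x = A - B  with
     A = Q^T_n (I - Q^S_n) x   and   B = (I - Q^T_n) Q^S_n x.
   For A, the S-stable vector y = (I - Q^S_n) x is pushed forward by S, and
   Q^T of the orbit y_k = S_{n+k,n} y is pulled back to time n with the inverse
   of T on the unstable spaces; consecutive pull-backs differ by the pulled-back
   defect (T_{n+k} - S_{n+k}) y_k, so Q^T_n y telescopes into a geometric series
   with ratio e^{-(α_S+α_T)} plus a remainder.  B is treated dually: Q^S_n x is
   pulled back with the inverse of S and the T-stable parts are pushed forward
   with T.  The remainders are at most 2 D e^{ν|n|} K(n) |x| (e^ν e^{-(α_S+α_T)})^N,
   which tends to 0 because ν < min(α_T, α_S); letting N → ∞ gives the bound. *)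

Section Evolution.
Context {R : realType} {X : completeNormedModType R}.

Lemma evol_fromS (S : int -> X -> X) m k x :
  evol_from S m k.+1 x = evol_from S (m + 1) k (S m x).
Proof.
elim: k => [|k IH]; first by rewrite /= addr0.
transitivity (S (m + k.+1%:Z) (evol_from S m k.+1 x)); first by [].
rewrite IH /= -addrA; congr (S (m + _) _); by rewrite addrC -intS.
Qed.

Lemma evol_fromB (S : int -> {linear X -> X}) m k x y :
  evol_from (fun n => S n : X -> X) m k (x - y) =
  evol_from (fun n => S n : X -> X) m k x - evol_from (fun n => S n : X -> X) m k y.
Proof. by elim: k => [|k IH] //=; rewrite IH raddfB. Qed.

Lemma evolE (S : int -> X -> X) m (k : nat) : evol S (m + k%:Z) m = evol_from S m k.
Proof. by rewrite /evol (addrC m) addrK absz_nat. Qed.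

(* The dichotomy restated along forward pairs (m, m + k), the form in which
   it is used by the telescoping arguments. *)
Lemma nonuniform_ED_forward {S : int -> X -> X} {Q : int -> {linear X -> X}}
    {K : int -> R} {a : R} :
  nonuniform_ED S Q K a ->
  [/\ forall n x, Q n (Q n x) = Q n x, forall n, 1 <= K n, 0 < a,
  forall m k x, Q (m + k%:Z) (evol_from S m k x) = evol_from S m k (Q m x) &
  exists Sinv : int -> int -> X -> X,
  [/\ forall m k x, Q m x = x -> Sinv m (m + k%:Z) (evol_from S m k x) = x,
   forall m k y, Q (m + k%:Z) y = y ->
     Q m (Sinv m (m + k%:Z) y) = Sinv m (m + k%:Z) y
     /\ evol_from S m k (Sinv m (m + k%:Z) y) = y,
   forall m k x, `|evol_from S m k (x - Q m x)| <= K m * expR (- a * k%:R) * `|x| &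
   forall m k x, `|Sinv m (m + k%:Z) (Q (m + k%:Z) x)|
                   <= K (m + k%:Z) * expR (- a * k%:R) * `|x| ]].
Proof.
move=> [Q_proj K_ge1 a_gt0 Q_comm [Sinv [Sinv_left Sinv_right stable unstable]]].
have m_le (m : int) (k : nat) : m <= m + k%:Z by rewrite lerDl.
split => //.
- by move=> n x; case: (Q_proj n).
- by move=> m k x; rewrite -evolE; exact: Q_comm.
exists Sinv; split.
- by move=> m k x; rewrite -evolE; exact: Sinv_left.
- by move=> m k y; rewrite -evolE; exact: Sinv_right.
- by move=> m k x; have := stable _ _ (m_le m k) x; rewrite evolE (addrC m) addrK.
- move=> m k x; have := unstable _ _ (m_le m k) x.
  by rewrite opprD addrA subrr add0r mulrNz mulrN mulNr.
Qed.

Lemma opnorm_le_lt0 {A : X -> X} {c : R} (x : X) : opnorm_le A c -> c < 0 -> x = 0.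
Proof.
move=> A_le c_lt0; apply/normr0_eq0/eqP; rewrite eq_le normr_ge0 andbT.
have := le_trans (normr_ge0 _) (A_le x); have := normr_ge0 x; nra.
Qed.

Lemma telescope_norm_le {z d : nat -> X} {c q : R} (N : nat) :
  (forall k, z k = d k + z k.+1) -> (forall k, `|d k| <= c * q ^+ k) ->
  `|z 0%N| <= \sum_(k < N) c * q ^+ k + `|z N|.
Proof.
move=> step d_le.
have -> : z 0%N = \sum_(k < N) d k + z N.
  elim: N => [|N IH]; first by rewrite big_ord0 add0r.
  by rewrite big_ord_recr /= -addrA -step.
apply: le_trans (ler_normD _ _) _; apply: lerD => //.
by apply: le_trans (ler_norm_sum _ _ _) _; apply: ler_sum => k _.
Qed.

End Evolution.

Lemma subr_swap (V : zmodType) (a b c d : V) : (a - c) - (b - d) = (a - b) - (c - d).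
Proof. by rewrite !opprB addrACA (addrC (- c)) addrACA (addrC d). Qed.

Lemma addz_natS (m : int) (k : nat) : m + k.+1%:Z = m + k%:Z + 1.
Proof. by rewrite -addrA (addrC (Posz k)) -intS. Qed.

Lemma addz1_nat (m : int) (k : nat) : m + 1 + k%:Z = m + k.+1%:Z.
Proof. by rewrite -addrA -intS. Qed.

Lemma subz_natS_add1 (n : int) (k : nat) : n - k.+1%:Z + 1 = n - k%:Z.
Proof. by rewrite intS; ring. Qed.

Lemma geometric_sum_le {R : realType} {c q : R} {N : nat} :
  0 <= q -> q < 1 -> 0 <= c -> \sum_(k < N) c * q ^+ k <= c / (1 - q).
Proof.
move=> q_ge0 q_lt1 c_ge0.
have q1_gt0 : 0 < 1 - q by rewrite subr_gt0.
have E : (1 - q) * \sum_(k < N) q ^+ k = 1 - q ^+ N.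
  elim: N => [|N IH]; first by rewrite big_ord0 mulr0 expr0 subrr.
  by rewrite big_ord_recr /= mulrDr IH exprS; ring.
rewrite -mulr_sumr ler_wpM2l // -[X in X <= _](mulKf (lt0r_neq0 q1_gt0)) E.
rewrite -[X in _ <= X]mulr1 ler_wpM2l ?invr_ge0 ?(ltW q1_gt0) //.
by rewrite gerBl exprn_ge0.
Qed.

(* Chaining the three estimates that bound every term of the telescopes:
   the (in)stability estimate, the closeness of T and S, and the decay of the
   orbit that is fed into the defect. *)
Lemma chain_le {R : realFieldType} {a v y k E e Y : R} :
  0 <= E -> 0 <= e -> a <= k * E * v -> k * v <= e * y -> y <= Y ->
  a <= E * (e * Y).
Proof.
move=> E_ge0 e_ge0 a_le kv_le y_le; apply: (le_trans a_le).
rewrite [k * E]mulrC -mulrA ler_wpM2l //; apply: (le_trans kv_le).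
exact: ler_wpM2l.
Qed.

Lemma expR_shift {R : realType} (a b : R) (k : nat) :
  expR (- a * k.+1%:R) * expR (- b * k%:R) = expR (- a) * expR (- (a + b)) ^+ k.
Proof. by rewrite -expRM_natr -!expRD mulrS; congr expR; ring. Qed.

Lemma expR_pow {R : realType} (a b : R) (N : nat) :
  expR (- a * N%:R) * expR (- b * N%:R) = expR (- (a + b)) ^+ N.
Proof. by rewrite -expRM_natr -expRD; congr expR; ring. Qed.

Section Telescopes.
Context {R : realType} {X : completeNormedModType R}.
Context {T S QT QS : int -> {linear X -> X}} {K : int -> R} {aT aS eps : R}
  {Tinv Sinv : int -> int -> X -> X}.
Local Notation ET := (evol_from (fun n => T n : X -> X)).
Local Notation ES := (evol_from (fun n => S n : X -> X)).
Local Notation q := (expR (- (aS + aT))).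

Hypotheses (QT_proj : forall n x, QT n (QT n x) = QT n x)
  (QS_proj : forall n x, QS n (QS n x) = QS n x)
  (K_gt0 : forall n, 0 < K n) (aT_gt0 : 0 < aT) (aS_gt0 : 0 < aS)
  (eps_ge0 : 0 <= eps)
  (TS_close : forall n x, K (n + 1) * `|T n x - S n x| <= eps * `|x|).
Hypotheses (QT_comm : forall m k x, QT (m + k%:Z) (ET m k x) = ET m k (QT m x))
  (Tinv_left : forall m k x, QT m x = x -> Tinv m (m + k%:Z) (ET m k x) = x)
  (Tinv_right : forall m k y, QT (m + k%:Z) y = y ->
     QT m (Tinv m (m + k%:Z) y) = Tinv m (m + k%:Z) y /\ ET m k (Tinv m (m + k%:Z) y) = y)
  (T_stable : forall m k x, `|ET m k (x - QT m x)| <= K m * expR (- aT * k%:R) * `|x|)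
  (T_unstable : forall m k x,
     `|Tinv m (m + k%:Z) (QT (m + k%:Z) x)| <= K (m + k%:Z) * expR (- aT * k%:R) * `|x|).
Hypotheses (QS_comm : forall m k x, QS (m + k%:Z) (ES m k x) = ES m k (QS m x))
  (Sinv_left : forall m k x, QS m x = x -> Sinv m (m + k%:Z) (ES m k x) = x)
  (Sinv_right : forall m k y, QS (m + k%:Z) y = y ->
     QS m (Sinv m (m + k%:Z) y) = Sinv m (m + k%:Z) y /\ ES m k (Sinv m (m + k%:Z) y) = y)
  (S_stable : forall m k x, `|ES m k (x - QS m x)| <= K m * expR (- aS * k%:R) * `|x|)
  (S_unstable : forall m k x,
     `|Sinv m (m + k%:Z) (QS (m + k%:Z) x)| <= K (m + k%:Z) * expR (- aS * k%:R) * `|x|).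

Lemma q_ge0 : 0 <= q. Proof. exact: expR_ge0. Qed.

Lemma q_lt1 : q < 1.
Proof. by rewrite expR_lt1 oppr_lt0 addr_gt0. Qed.

Lemma QT_comm1 m x : QT (m + 1) (T m x) = T m (QT m x).
Proof. by have := QT_comm m 1 x; rewrite /= addr0. Qed.

Lemma QS_comm1 m x : QS (m + 1) (S m x) = S m (QS m x).
Proof. by have := QS_comm m 1 x; rewrite /= addr0. Qed.

Lemma Tinv_step n k u : QT (n + k%:Z) u = u ->
  Tinv n (n + k.+1%:Z) (T (n + k%:Z) u) = Tinv n (n + k%:Z) u.
Proof.
move=> u_unst; have [v_unst v_pull] := Tinv_right n k u u_unst.
set v := Tinv n (n + k%:Z) u in v_unst v_pull *.
by rewrite -[in LHS]v_pull; exact: (Tinv_left n k.+1 _ v_unst).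
Qed.

Lemma TinvB n k a b : QT (n + k%:Z) a = a -> QT (n + k%:Z) b = b ->
  Tinv n (n + k%:Z) (a - b) = Tinv n (n + k%:Z) a - Tinv n (n + k%:Z) b.
Proof.
move=> a_unst b_unst.
have [a'_unst a_pull] := Tinv_right n k a a_unst.
have [b'_unst b_pull] := Tinv_right n k b b_unst.
rewrite -[in LHS]a_pull -[in LHS]b_pull -evol_fromB; apply: Tinv_left.
by rewrite raddfB; congr (_ - _); [exact: a'_unst | exact: b'_unst].
Qed.

Lemma Sinv_step m k y : QS (m + k.+1%:Z) y = y ->
  S m (Sinv m (m + k.+1%:Z) y) = Sinv (m + 1) (m + k.+1%:Z) y.
Proof.
move=> y_unst; have [w_unst w_push] := Sinv_right m k.+1 y y_unst.
have Sw_unst : QS (m + 1) (S m (Sinv m (m + k.+1%:Z) y)) = S m (Sinv m (m + k.+1%:Z) y).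
  by rewrite QS_comm1 w_unst.
by have := Sinv_left _ k _ Sw_unst; rewrite -evol_fromS w_push addz1_nat => ->.
Qed.

Lemma unstable_part_le n x N :
  `|QT n (x - QS n x)| <=
    eps * K n * `|x| * expR (- aT) / (1 - q) + K (n + N%:Z) * (K n * `|x|) * q ^+ N.
Proof.
pose y k := ES n k (x - QS n x).
pose z k := Tinv n (n + k%:Z) (QT (n + k%:Z) (y k)).
pose d k := Tinv n (n + k.+1%:Z)
  (QT (n + k.+1%:Z) (T (n + k%:Z) (y k) - S (n + k%:Z) (y k))).
have y_le k : `|y k| <= K n * expR (- aS * k%:R) * `|x| by exact: S_stable.
have z0 : z 0%N = QT n (x - QS n x).
  by have := Tinv_left n 0 _ (QT_proj n (x - QS n x)); rewrite /z /y /= !addr0.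
have step k : z k = d k + z k.+1.
  rewrite /z /d -Tinv_step ?QT_proj // -QT_comm1 -addz_natS raddfB TinvB ?QT_proj //.
  by rewrite subrK.
have d_le k : `|d k| <= eps * K n * `|x| * expR (- aT) * q ^+ k.
  have close := TS_close (n + k%:Z) (y k); rewrite -addz_natS in close.
  have weight : expR (- aT * k.+1%:R) * (eps * (K n * expR (- aS * k%:R) * `|x|))
                = eps * K n * `|x| * expR (- aT) * q ^+ k.
    by rewrite -[in RHS]mulrA (addrC aS) -expR_shift; ring.
  by rewrite -weight; exact: chain_le (expR_ge0 _) eps_ge0 (T_unstable n k.+1 _) close (y_le k).
have zN : `|z N| <= K (n + N%:Z) * (K n * `|x|) * q ^+ N.
  have weight : K (n + N%:Z) * expR (- aT * N%:R) * (K n * expR (- aS * N%:R) * `|x|)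
                = K (n + N%:Z) * (K n * `|x|) * q ^+ N.
    by rewrite -expR_pow; ring.
  rewrite -weight; apply: le_trans (T_unstable n N (y N)) _.
  apply: ler_wpM2l; [exact: mulr_ge0 (ltW (K_gt0 _)) (expR_ge0 _) | exact: y_le].
rewrite -z0; apply: le_trans (telescope_norm_le N step d_le) _; apply: lerD => //.
have c_ge0 : 0 <= eps * K n * `|x| * expR (- aT).
  by rewrite !mulr_ge0 ?expR_ge0 ?(ltW (K_gt0 n)).
exact: geometric_sum_le q_ge0 q_lt1 c_ge0.
Qed.

Lemma stable_part_le n x N :
  `|QS n x - QT n (QS n x)| <=
    eps * K n * `|x| * expR (- aS) / (1 - q) + K (n - N%:Z) * (K n * `|x|) * q ^+ N.
Proof.
pose u k := Sinv (n - k%:Z) n (QS n x).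
pose f k := ET (n - k%:Z) k (u k - QT (n - k%:Z) (u k)).
pose v k := S (n - k.+1%:Z) (u k.+1) - T (n - k.+1%:Z) (u k.+1).
have u_le k : `|u k| <= K n * expR (- aS * k%:R) * `|x|.
  by have := S_unstable (n - k%:Z) k x; rewrite subrK.
have f0 : f 0%N = QS n x - QT n (QS n x).
  rewrite /f /u /= subr0.
  by have := Sinv_left n 0 _ (QS_proj n x); rewrite /= !addr0 => ->.
have u_step k : S (n - k.+1%:Z) (u k.+1) = u k.
  have := Sinv_step (n - k.+1%:Z) k (QS n x).
  by rewrite subrK subz_natS_add1 QS_proj => /(_ erefl).
have diff k : f k - f k.+1 = ET (n - k%:Z) k (v k - QT (n - k%:Z) (v k)).
  rewrite /f evol_fromS linearB -QT_comm1 subz_natS_add1 -(u_step k).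
  by rewrite -evol_fromB (raddfB (QT (n - k%:Z))) subr_swap.
have d_le k : `|f k - f k.+1| <= eps * K n * `|x| * expR (- aS) * q ^+ k.
  have close := TS_close (n - k.+1%:Z) (u k.+1).
  rewrite subz_natS_add1 distrC in close.
  have weight : expR (- aT * k%:R) * (eps * (K n * expR (- aS * k.+1%:R) * `|x|))
                = eps * K n * `|x| * expR (- aS) * q ^+ k.
    by rewrite -[in RHS]mulrA -expR_shift; ring.
  by rewrite -weight diff; exact: chain_le (expR_ge0 _) eps_ge0 (T_stable _ k _) close (u_le k.+1).
have fN : `|f N| <= K (n - N%:Z) * (K n * `|x|) * q ^+ N.
  have weight : K (n - N%:Z) * expR (- aT * N%:R) * (K n * expR (- aS * N%:R) * `|x|)
                = K (n - N%:Z) * (K n * `|x|) * q ^+ N.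
    by rewrite -expR_pow; ring.
  rewrite -weight; apply: le_trans (T_stable _ N (u N)) _.
  apply: ler_wpM2l; [exact: mulr_ge0 (ltW (K_gt0 _)) (expR_ge0 _) | exact: u_le].
have step k : f k = (f k - f k.+1) + f k.+1 by rewrite subrK.
rewrite -f0; apply: le_trans (telescope_norm_le N step d_le) _; apply: lerD => //.
have c_ge0 : 0 <= eps * K n * `|x| * expR (- aS).
  by rewrite !mulr_ge0 ?expR_ge0 ?(ltW (K_gt0 n)).
exact: geometric_sum_le q_ge0 q_lt1 c_ge0.
Qed.

Lemma projection_difference_le n x N :
  `|QT n x - QS n x| <=
    K n * ((expR (- aS) + expR (- aT)) / (1 - q) * eps * `|x|)
    + (K (n + N%:Z) + K (n - N%:Z)) * (K n * `|x|) * q ^+ N.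
Proof.
have -> : QT n x - QS n x = QT n (x - QS n x) - (QS n x - QT n (QS n x)).
  by rewrite raddfB opprB addrA subrK.
apply: le_trans (ler_normB _ _) _.
apply: le_trans (lerD (unstable_part_le n x N) (stable_part_le n x N)) _.
lra.
Qed.

End Telescopes.

Lemma remainder_le {R : realType} {K : int -> R} {D nu c q : R} {n : int} {N : nat} :
  bound_growth K D nu -> 0 <= c -> 0 <= q ->
  (K (n + N%:Z) + K (n - N%:Z)) * c * q ^+ N
    <= 2 * D * expR (nu * `|n|%:~R) * c * (expR nu * q) ^+ N.
Proof.
move=> [D_ge1 [nu_gt0 K_le]] c_ge0 q_ge0.
have K_shift (m : int) : (`|m| <= `|n| + N)%N ->
    K m <= D * expR (nu * `|n|%:~R) * expR nu ^+ N.
  move=> m_le; apply: le_trans (K_le m) _.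
  rewrite -expRM_natr -mulrA -expRD; apply: ler_wpM2l; first lra.
  rewrite ler_expR -mulrDr; apply: ler_wpM2l; first exact: ltW.
  by rewrite -[N%:R]/((N%:Z)%:~R) -intrD ler_int; lia.
have sum_le : K (n + N%:Z) + K (n - N%:Z) <= 2 * (D * expR (nu * `|n|%:~R) * expR nu ^+ N).
  by rewrite mulr2n mulrDl !mul1r; apply: lerD; apply: K_shift; lia.
apply: le_trans (ler_wpM2r (exprn_ge0 N q_ge0) (ler_wpM2r c_ge0 sum_le)) _.
rewrite exprMn; lra.
Qed.

Lemma le_of_geometric_tail {R : realType} {a c w r : R} :
  0 <= r -> r < 1 -> (forall N, a <= c + w * r ^+ N) -> a <= c.
Proof.
move=> r_ge0 r_lt1 tail; rewrite leNgt; apply/negP => c_lt_a.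
have [w_le0|w_gt0] := leP w 0.
  by have := tail 0%N; rewrite expr0 mulr1; lra.
have : `|r| < 1 by rewrite ger0_norm.
move/cvg_expr/cvgr_lt => /(_ ((a - c) / w)); rewrite divr_gt0 ?subr_gt0 //.
move=> /(_ isT) [N _ small]; have := small N (leqnn N) => /=.
rewrite ltr_pdivlMr // => rN_small.
by have := tail N; lra.
Qed.

Theorem mainTheorem2 (R : realType) (X : completeNormedModType R)
  (T S : int -> {linear X -> X}) (QT QS : int -> {linear X -> X})
  (K : int -> R) (D nu alphaT alphaS eps : R) :
  (forall n, bounded_linear (T n)) ->
  (forall n, bounded_linear (S n)) ->
  bound_growth K D nu ->
  nonuniform_ED (fun n => T n : X -> X) QT K alphaT ->
  nonuniform_ED (fun n => S n : X -> X) QS K alphaS ->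
  nu < Num.min alphaT alphaS ->
  (forall n : int, opnorm_le (fun x => K (n + 1) *: (T n x - S n x)) eps) ->
  forall n : int,
    opnorm_le (fun x => (K n)^-1 *: (QT n x - QS n x))
      ((expR (- alphaS) + expR (- alphaT)) / (1 - expR (- (alphaS + alphaT))) * eps).
Proof.
move=> _ _ growth EDT EDS nu_lt close n x /=.
have [QT_proj K_ge1 aT_gt0 QT_comm [Tinv [Tinv_left Tinv_right T_stable T_unstable]]] :=
  nonuniform_ED_forward EDT.
have [QS_proj _ aS_gt0 QS_comm [Sinv [Sinv_left Sinv_right S_stable S_unstable]]] :=
  nonuniform_ED_forward EDS.
have K_gt0 m : 0 < K m := lt_le_trans ltr01 (K_ge1 m).
have [eps_lt0|eps_ge0] := ltP eps 0.
  by rewrite (opnorm_le_lt0 x (close n) eps_lt0) normr0 mulr0 !linear0 addr0 scaler0 normr0.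
have TS_close m y : K (m + 1) * `|T m y - S m y| <= eps * `|y|.
  by have := close m y; rewrite normrZ gtr0_norm.
have r_lt1 : expR nu * expR (- (alphaS + alphaT)) < 1.
  by rewrite -expRD expR_lt1; move: nu_lt; rewrite lt_min => /andP[]; lra.
rewrite normrZ normfV gtr0_norm // -(ler_pM2l (K_gt0 n)) mulrA divff ?gt_eqF // mul1r.
apply: (le_of_geometric_tail (mulr_ge0 (expR_ge0 _) (expR_ge0 _)) r_lt1) => N.
apply: le_trans (projection_difference_le QT_proj QS_proj K_gt0 aT_gt0 aS_gt0 eps_ge0
  TS_close QT_comm Tinv_left Tinv_right T_stable T_unstable QS_comm Sinv_left Sinv_right
  S_stable S_unstable n x N) _.
by rewrite lerD2l; exact: remainder_le growth (mulr_ge0 (ltW (K_gt0 n)) (normr_ge0 x)) (expR_ge0 _).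
Qed.
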